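(* Let $(X_{1,\infty},f_{1,\infty})$ be a topological nonautonomous dynamical system, $\mathcal{U}_{1,\infty}\in\mathcal{L}(X_{1,\infty})$, and assume that $f_{1,\infty}$ is equicontinuous. Then for each $m\ge1$ the sequence $\mathcal{V}_{1,\infty}$ defined by $\mathcal{V}_n:=\bigvee_{i=0}^{m-1}f_n^{-i}\mathcal{U}_{n+i}$ is an element of $\mathcal{L}(X_{1,\infty})$.
   Context: Topological NDS: compact metric spaces $(X_n,\varrho_n)$ and continuous maps $f_n:X_n\to X_{n+1}$; $f_n^i=f_{n+i-1}\circ\cdots\circ f_n$, $f_n^0=\mathrm{id}$, $f_n^{-i}\mathcal{U}=\{(f_n^i)^{-1}(U):U\in\mathcal{U}\}$; the join of covers consists of all intersections of one member from each. Equicontinuity: for every $\varepsilon>0$ there is $\delta>0$ with $\varrho_{n+1}(f_nx,f_ny)<\varepsilon$ whenever $\varrho_n(x,y)<\delta$, uniformly in $n$. The Lebesgue number of an open cover of a compact metric space is the maximal $\varepsilon>0$ such that every $\varepsilon$-ball lies in a member of the cover. $\mathcal{L}(X_{1,\infty})$ is the family of sequences $\{\mathcal{U}_n\}$, $\mathcal{U}_n$ an open cover of $X_n$, whose Lebesgue numbers are bounded away from zero uniformly in $n$. *)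

From Stdlib Require Import Reals List.
Open Scope R_scope.

Definition is_metric {T : Type} (rho : T -> T -> R) : Prop :=
  (forall x y, 0 <= rho x y) /\
  (forall x y, rho x y = 0 <-> x = y) /\
  (forall x y, rho x y = rho y x) /\
  (forall x y z, rho x z <= rho x y + rho y z).

Definition ball {T : Type} (rho : T -> T -> R) (x : T) (e : R) : T -> Prop :=
  fun y => rho x y < e.

Definition metric_open {T : Type} (rho : T -> T -> R) (O : T -> Prop) : Prop :=
  forall x, O x -> exists e, 0 < e /\ forall y, ball rho x e y -> O y.

Definition open_cover {T : Type} (rho : T -> T -> R) (U : (T -> Prop) -> Prop) : Prop :=
  (forall O, U O -> metric_open rho O) /\ (forall x, exists O, U O /\ O x).

Definition metric_compact {T : Type} (rho : T -> T -> R) : Prop :=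
  forall U, open_cover rho U ->
    exists l : list (T -> Prop), (forall O, In O l -> U O) /\
      (forall x, exists O, In O l /\ O x).

Definition metric_continuous {T S : Type} (rT : T -> T -> R) (rS : S -> S -> R)
  (f : T -> S) : Prop :=
  forall x e, 0 < e -> exists d, 0 < d /\ forall y, rT x y < d -> rS (f x) (f y) < e.

Definition TNDS (X : nat -> Type) (rho : forall n, X n -> X n -> R)
  (f : forall n, X n -> X (S n)) : Prop :=
  (forall n, is_metric (rho n)) /\ (forall n, metric_compact (rho n)) /\
  (forall n, metric_continuous (rho n) (rho (S n)) (f n)).

Definition equicontinuous (X : nat -> Type) (rho : forall n, X n -> X n -> R)
  (f : forall n, X n -> X (S n)) : Prop :=
  forall e, 0 < e -> exists d, 0 < d /\
    forall n x y, rho n x y < d -> rho (S n) (f n x) (f n y) < e.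

(* Iterates: fiter f n i = f_n^i : X n -> X (i + n)%nat  (note i + n, so that
   0 + n and (S i) + n reduce). *)
Fixpoint fiter (X : nat -> Type) (f : forall n, X n -> X (S n)) (n i : nat)
  : X n -> X (i + n)%nat :=
  match i as i0 return X n -> X (i0 + n)%nat with
  | O => fun x => x
  | S j => fun x => f (j + n)%nat (fiter X f n j x)
  end.

(* The family L(X_{1,oo}): sequences of open covers whose Lebesgue numbers are
   bounded away from zero uniformly in n, i.e. there is eps > 0 such that for
   every n every eps-ball of X n lies in a member of U n. *)
Definition in_L (X : nat -> Type) (rho : forall n, X n -> X n -> R)
  (U : forall n, (X n -> Prop) -> Prop) : Prop :=
  (forall n, open_cover (rho n) (U n)) /\
  exists eps, 0 < eps /\
    forall n x, exists O, U n O /\ forall y, ball (rho n) x eps y -> O y.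

(* Join V_n := \/_{i=0}^{m-1} f_n^{-i} U_{n+i}: all intersections
   \bigcap_{i<m} (f_n^i)^{-1}(W_i) with W_i in U_{n+i}. *)
Definition join_cover (X : nat -> Type) (f : forall n, X n -> X (S n))
  (U : forall n, (X n -> Prop) -> Prop) (m n : nat) : (X n -> Prop) -> Prop :=
  fun V => exists W : forall i, X (i + n)%nat -> Prop,
    (forall i, (i < m)%nat -> U (i + n)%nat (W i)) /\
    V = (fun x => forall i, (i < m)%nat -> W i (fiter X f n i x)).

(* Equicontinuity makes every iterate f_n^i, i < m, uniformly continuous with a
   modulus independent of n.  If eps is a uniform Lebesgue number of the U_n,
   choose delta so that delta-close points have eps-close i-th iterates for all
   i < m; then the delta-ball around x lies in the join member built from the
   members of U_{n+i} containing the eps-balls around f_n^i x. *)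

From Stdlib Require Import Reals Lra Lia ClassicalEpsilon ChoiceFacts.
Open Scope R_scope.

Lemma uniform_radius_lt (m : nat) (P : nat -> R -> Prop) :
  (forall i e e', P i e -> 0 < e' <= e -> P i e') ->
  (forall i, (i < m)%nat -> exists e, 0 < e /\ P i e) ->
  exists e, 0 < e /\ forall i, (i < m)%nat -> P i e.
Proof.
  intros P_shrink; induction m as [|m IH]; intros P_ex.
  - exists 1; split; [lra | intros i Hi; lia].
  - destruct IH as [e1 [He1 P1]]; [intros i Hi; apply P_ex; lia |].
    destruct (P_ex m (Nat.lt_succ_diag_r m)) as [e2 [He2 P2]].
    assert (Hmin : 0 < Rmin e1 e2) by (apply Rmin_glb_lt; lra).
    exists (Rmin e1 e2); split; [exact Hmin |].
    intros i Hi; destruct (Nat.eq_dec i m) as [-> | Hne].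
    + apply P_shrink with e2; [exact P2 | split; [exact Hmin | apply Rmin_r]].
    + apply P_shrink with e1; [apply P1; lia | split; [exact Hmin | apply Rmin_l]].
Qed.

Lemma fiter_continuous X rho f :
  (forall n, metric_continuous (rho n) (rho (S n)) (f n)) ->
  forall i n, metric_continuous (rho n) (rho (i + n)%nat) (fiter X f n i).
Proof.
  intros f_cont; induction i as [|i IH]; intros n x e He.
  - exists e; split; [exact He | easy].
  - destruct (f_cont (i + n)%nat (fiter X f n i x) e He) as [d1 [Hd1 H1]].
    destruct (IH n x d1 Hd1) as [d [Hd H2]].
    exists d; split; [exact Hd |].
    intros y Hy; apply H1, H2, Hy.
Qed.

Lemma fiter_equicontinuous X rho f :
  equicontinuous X rho f ->
  forall i e, 0 < e -> exists d, 0 < d /\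
    forall n x y, rho n x y < d ->
      rho (i + n)%nat (fiter X f n i x) (fiter X f n i y) < e.
Proof.
  intros f_equi; induction i as [|i IH]; intros e He.
  - exists e; split; [exact He | easy].
  - destruct (f_equi e He) as [d1 [Hd1 H1]].
    destruct (IH d1 Hd1) as [d [Hd H2]].
    exists d; split; [exact Hd |].
    intros n x y Hy; apply H1, H2, Hy.
Qed.

Lemma fiter_uniform_modulus X rho f m e :
  equicontinuous X rho f -> 0 < e ->
  exists d, 0 < d /\ forall i, (i < m)%nat ->
    forall n x y, rho n x y < d ->
      rho (i + n)%nat (fiter X f n i x) (fiter X f n i y) < e.
Proof.
  intros f_equi He; apply uniform_radius_lt.
  - intros i d d' Hd Hd' n x y Hxy; apply Hd; lra.
  - intros i _; apply fiter_equicontinuous; assumption.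
Qed.

Lemma join_cover_choice X f U m n (P : forall i, (X (i + n)%nat -> Prop) -> Prop) :
  (forall i, exists O, U (i + n)%nat O /\ P i O) ->
  exists W : forall i, X (i + n)%nat -> Prop, (forall i, P i (W i)) /\
    join_cover X f U m n (fun x => forall i, (i < m)%nat -> W i (fiter X f n i x)).
Proof.
  intros HP.
  destruct (non_dep_dep_functional_choice ClassicalEpsilon.choice
              (fun i => X (i + n)%nat -> Prop)
              (fun i O => U (i + n)%nat O /\ P i O) HP) as [W HW].
  exists W; split; [intros i; apply HW |].
  exists W; split; [intros i _; apply HW | reflexivity].
Qed.

Lemma join_cover_open X rho f U m n :
  (forall n, metric_continuous (rho n) (rho (S n)) (f n)) ->
  (forall n, open_cover (rho n) (U n)) ->
  forall V, join_cover X f U m n V -> metric_open (rho n) V.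
Proof.
  intros f_cont U_cover V [W [HW ->]] x Hx.
  destruct (uniform_radius_lt m
              (fun i e => forall y, ball (rho n) x e y -> W i (fiter X f n i y)))
    as [e [He He']].
  - intros i e e' Hball He' y Hy; apply Hball; unfold ball in *; lra.
  - intros i Hi.
    destruct (proj1 (U_cover (i + n)%nat) (W i) (HW i Hi) (fiter X f n i x) (Hx i Hi))
      as [e1 [He1 Hopen]].
    destruct (fiter_continuous X rho f f_cont i n x e1 He1) as [d [Hd Hc]].
    exists d; split; [exact Hd |].
    intros y Hy; apply Hopen, Hc, Hy.
  - exists e; split; [exact He |].
    intros y Hy i Hi; apply He'; assumption.
Qed.

Lemma join_cover_covers X f U m n :
  (forall n x, exists O, U n O /\ O x) ->
  forall x, exists V, join_cover X f U m n V /\ V x.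
Proof.
  intros U_covers x.
  destruct (join_cover_choice X f U m n (fun i O => O (fiter X f n i x)))
    as [W [HWx HV]].
  - intros i; apply U_covers.
  - eexists; split; [exact HV |].
    intros i _; apply HWx.
Qed.

Lemma join_cover_open_cover X rho f U m n :
  (forall n, metric_continuous (rho n) (rho (S n)) (f n)) ->
  (forall n, open_cover (rho n) (U n)) ->
  open_cover (rho n) (join_cover X f U m n).
Proof.
  intros f_cont U_cover; split.
  - apply join_cover_open; assumption.
  - apply join_cover_covers; intros k; apply U_cover.
Qed.

Lemma join_cover_lebesgue X rho f U m eps d :
  (forall n x, exists O, U n O /\ forall y, ball (rho n) x eps y -> O y) ->
  (forall i, (i < m)%nat -> forall n x y, rho n x y < d ->
     rho (i + n)%nat (fiter X f n i x) (fiter X f n i y) < eps) ->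
  forall n x, exists V, join_cover X f U m n V /\
    forall y, ball (rho n) x d y -> V y.
Proof.
  intros U_leb Hd n x.
  destruct (join_cover_choice X f U m n
              (fun i O => forall y, ball (rho (i + n)%nat) (fiter X f n i x) eps y -> O y))
    as [W [HWball HV]].
  - intros i; apply U_leb.
  - eexists; split; [exact HV |].
    intros y Hy i Hi; apply HWball, Hd; assumption.
Qed.

Theorem mainTheorem13 (X : nat -> Type) (rho : forall n, X n -> X n -> R)
  (f : forall n, X n -> X (S n)) (U : forall n, (X n -> Prop) -> Prop) :
  TNDS X rho f -> in_L X rho U -> equicontinuous X rho f ->
  forall m : nat, (1 <= m)%nat -> in_L X rho (join_cover X f U m).
Proof.
  intros [_ [_ f_cont]] [U_cover [eps [Heps U_leb]]] f_equi m _.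
  split.
  - intros n; apply join_cover_open_cover; assumption.
  - destruct (fiter_uniform_modulus X rho f m eps f_equi Heps) as [d [Hd Hmod]].
    exists d; split; [exact Hd |].
    apply join_cover_lebesgue with eps; assumption.
Qed.
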